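(* Let $d\ge1$, $m\in\mathbb{N}$ ($m\ge1$), and let $A_0,A_1\in\mathbb{R}^{d\times d}$ be constant matrices. Let $G:\mathbb{Z}_0^\infty\to\mathbb{R}^{d\times d}$ satisfy $A_1G(u)=G(u)A_1$ for all $u\in\mathbb{Z}_0^\infty$, and let $\Psi:\mathbb{Z}_{-m}^0\to\mathbb{R}^{d\times d}$ satisfy $A_1\Psi(u)=\Psi(u)A_1$ for all $u\in\mathbb{Z}_{-m}^0$. Let $Z$ be the discrete function defined in the context. Then \[ X(u)=Z(u)\Psi(-m)+\sum_{r=-m+1}^{0}Z(u-m-r)\,\Delta\Psi(r-1)+\sum_{r=1}^{u}Z(u-m-r)\,G(r-1),\qquad u\in\mathbb{Z}_{-m}^{\infty} \] (an empty sum being $\Theta$), is the unique solution of \[ \Delta X(u)=A_0X(u-m)+X(u-m)A_1+G(u),\ \ u\in\mathbb{Z}_0^{\infty},\qquad X(u)=\Psi(u),\ \ u\in\mathbb{Z}_{-m}^{0}. \]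
   Context: $\Theta$ and $I$ denote the $d\times d$ zero and identity matrices; $\mathbb{Z}_a^b=\{a,a+1,\dots,b\}$ (with $\mathbb{Z}_a^\infty=\{a,a+1,\dots\}$ and $\mathbb{Z}_{-\infty}^b=\{\dots,b-1,b\}$); $\Delta X(u)=X(u+1)-X(u)$. For integers $a$ and $r\ge0$, $\binom{a}{r}=a(a-1)\cdots(a-r+1)/r!$. Define matrices $Q_{r+1}(rm)$, $r=0,1,2,\dots$, by $Q_1(0)=I$ and $Q_{r+1}(rm)=A_0Q_r((r-1)m)+Q_r((r-1)m)A_1$ for $r\ge1$. Define $Z(u)=\Theta$ for $u\in\mathbb{Z}_{-\infty}^{-m-1}$, $Z(u)=I$ for $u\in\mathbb{Z}_{-m}^{0}$, and for each integer $n\ge1$ and $u\in\mathbb{Z}_{(n-1)(m+1)+1}^{n(m+1)}$, \[ Z(u)=\sum_{r=0}^{n}\binom{u-(r-1)m}{r}Q_{r+1}(rm). \] *)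

From HB Require Import structures.
From mathcomp Require Import all_boot all_order all_algebra.
From mathcomp Require Import reals.
Set Implicit Arguments. Unset Strict Implicit. Unset Printing Implicit Defensive.
Import Order.TTheory GRing.Theory Num.Theory.
Local Open Scope ring_scope.

Section Defs.
Variables (R : realType) (d : nat).

Definition binz (a : int) (r : nat) : R :=
  ((\prod_(i < r) (a - i%:Z))%:~R) / (r`!)%:R.

(* Qmat r = Q_{r+1}(r m) *)
Fixpoint Qmat (A0 A1 : 'M[R]_d) (r : nat) : 'M[R]_d :=
  match r with
  | 0%N => 1%:M
  | r'.+1 => A0 *m Qmat A0 A1 r' + Qmat A0 A1 r' *m A1
  end.

(* Z(u): Theta for u <= -m-1, I for -m <= u <= 0, and for n >= 1 and
   (n-1)(m+1)+1 <= u <= n(m+1): sum_{r=0}^n binom(u-(r-1)m, r) Q_{r+1}(rm).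
   For u >= 1, n = (u-1) div (m+1) + 1. *)
Definition Zmat (A0 A1 : 'M[R]_d) (m : nat) (u : int) : 'M[R]_d :=
  if u < - (m%:Z) then 0
  else if u <= 0 then 1%:M
  else let n := ((absz u).-1 %/ m.+1).+1 in
    \sum_(0 <= r < n.+1) binz (u - (r%:Z - 1) * m%:Z) r *: Qmat A0 A1 r.

Definition DeltaM (X : int -> 'M[R]_d) (u : int) : 'M[R]_d := X (u + 1) - X u.

(* the explicit formula; the sum over r = -m+1..0 is indexed by k = r + m - 1,
   the sum over r = 1..u is empty when u <= 0 *)
Definition Xsol (A0 A1 : 'M[R]_d) (m : nat) (G Psi : int -> 'M[R]_d) (u : int) : 'M[R]_d :=
  Zmat A0 A1 m u *m Psi (- (m%:Z))
  + \sum_(0 <= k < m)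
      (let r := k%:Z - m%:Z + 1 in
       Zmat A0 A1 m (u - m%:Z - r) *m DeltaM Psi (r - 1))
  + \sum_(1 <= k < (absz u).+1 | 0 < u)
      Zmat A0 A1 m (u - m%:Z - k%:Z) *m G (k%:Z - 1).

Definition solves_ivp (A0 A1 : 'M[R]_d) (m : nat) (G Psi X : int -> 'M[R]_d) : Prop :=
  (forall u : int, 0 <= u ->
     DeltaM X u = A0 *m X (u - m%:Z) + X (u - m%:Z) *m A1 + G u)
  /\ (forall u : int, - (m%:Z) <= u <= 0 -> X u = Psi u).

End Defs.

From HB Require Import structures.
From mathcomp Require Import all_boot all_order all_algebra.
From mathcomp Require Import reals.
From mathcomp Require Import zify.
Import Order.TTheory GRing.Theory Num.Theory.
Local Open Scope ring_scope.
Set Implicit Arguments. Unset Strict Implicit.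

(* Writing sylv M := A0 M + M A1 and w = v + m, one has Z(v) = sum_r C(w - r m, r) Q_{r+1}(rm)
   for v >= -m, so Pascal's rule gives Z(v+1) - Z(v) = sylv(Z(v - m)) for every v except
   v = -m-1, where Z jumps from Theta to I. Right multiplication by a matrix commuting with
   A1 commutes with sylv, so every term Z(u - c) P of the formula solves the homogeneous
   equation except at u = c - m - 1; for u >= 0 the only such term is Z(u - m - (u+1)) G(u),
   which contributes the forcing G(u). On [-m, 0] the Delta Psi terms telescope to Psi(u).
   Uniqueness: the equation determines X(u+1) from X(u) and X(u - m). *)

Lemma subr_add3 (V : zmodType) (a b c a' b' c' : V) :
  a + b + c - (a' + b' + c') = (a - a') + (b - b') + (c - c').
Proof. by rewrite !opprD addrACA (addrACA a). Qed.

Section Sylvester.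
Variables (R : comNzRingType) (d : nat) (A0 A1 : 'M[R]_d).

Definition sylv (M : 'M[R]_d) : 'M[R]_d := A0 *m M + M *m A1.

Fact sylv_is_linear : linear sylv.
Proof.
by move=> a M N; rewrite /sylv mulmxDr mulmxDl -scalemxAr -scalemxAl scalerDr addrACA.
Qed.

HB.instance Definition _ := GRing.isLinear.Build R 'M[R]_d 'M[R]_d _ sylv sylv_is_linear.

Lemma sylv_mulmx (M P : 'M[R]_d) : comm_mx A1 P -> sylv (M *m P) = sylv M *m P.
Proof. by move=> hP; rewrite /sylv mulmxDl !mulmxA -!mulmxA hP. Qed.

End Sylvester.

Lemma prod_subz_ffact (k r : nat) : \prod_(i < r) (k%:Z - i%:Z) = (k ^_ r)%:Z.
Proof.
elim: r => [|r IH]; first by rewrite big_ord0 ffactn0.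
rewrite big_ord_recr /= IH ffactnSr.
have [le_rk | lt_kr] := leqP r k; first by rewrite PoszM subzn.
by rewrite ffact_small // mul0r mul0n.
Qed.

Lemma binz_nat (R : realType) (k r : nat) : binz R k%:Z r = 'C(k, r)%:R.
Proof.
rewrite /binz prod_subz_ffact -bin_ffact -pmulrn natrM mulfK //.
by rewrite pnatr_eq0 -lt0n fact_gt0.
Qed.

Lemma bin_sub_mul_eq0 (m w r : nat) : (w < r * m.+1)%N -> 'C(w - r * m, r) = 0%N.
Proof. by move=> lt_w; rewrite bin_small //; lia. Qed.

Lemma bin_sub_mulS (m w s : nat) : (m <= w)%N ->
  'C(w.+1 - s.+1 * m, s.+1) = ('C(w - m - s * m, s) + 'C(w - s.+1 * m, s.+1))%N.
Proof.
move=> le_mw; rewrite -subnDA -mulSn.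
have [le_sw | lt_ws] := leqP (s.+1 * m) w; first by rewrite subSn // binS addnC.
have -> : (w.+1 - s.+1 * m = 0)%N by lia.
have -> : (w - s.+1 * m = 0)%N by lia.
by rewrite !bin0n; case: s lt_ws => [|s] lt_ws //; lia.
Qed.

Section Kernel.
Variables (R : realType) (d : nat) (A0 A1 : 'M[R]_d) (m : nat).
Local Notation Z := (Zmat A0 A1 m).
Local Notation sylv := (sylv A0 A1).

Definition Zsum (N w : nat) : 'M[R]_d :=
  \sum_(r < N) 'C(w - r * m, r)%:R *: Qmat A0 A1 r.

Lemma Zsum_widen (N w : nat) : (w < N)%N -> Zsum N w = Zsum w.+1 w.
Proof.
move=> lt_wN; rewrite /Zsum -!(big_mkord xpredT (fun r => 'C(w - r * m, r)%:R *: Qmat A0 A1 r)).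
rewrite (big_cat_nat _ (n := w.+1)) //= [X in _ + X]big1_seq ?addr0 // => r.
by rewrite mem_index_iota => /andP[_ /andP[lt_wr _]]; rewrite bin_sub_mul_eq0 ?scale0r //; nia.
Qed.

Lemma ZmatE (w : nat) : Z (w%:Z - m%:Z) = Zsum w.+1 w.
Proof.
rewrite /Zmat ltNge (_ : - m%:Z <= w%:Z - m%:Z); last lia.
case: ifP => [le_wm | /negbT gt_wm].
  rewrite /Zsum big_ord_recl subn0 bin0 scale1r big1 ?addr0 // => r _.
  by rewrite bin_small ?scale0r // lift0; nia.
set n := (_ %/ m.+1).+1.
have le_nw : (n * m.+1 <= w)%N.
  rewrite /n mulSn; have := leq_divM (absz (w%:Z - m%:Z)).-1 m.+1; lia.
have lt_wn : (w < n.+1 * m.+1)%N.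
  rewrite /n; have := ltn_ceil (absz (w%:Z - m%:Z)).-1 (ltn0Sn m); lia.
rewrite -(@Zsum_widen (n.+1 * m.+1)) // /Zsum.
rewrite -(big_mkord xpredT (fun r => 'C(w - r * m, r)%:R *: Qmat A0 A1 r)).
rewrite [RHS](big_cat_nat _ (n := n.+1)) //=; last nia.
rewrite [X in _ = _ + X]big1_seq ?addr0; last first.
  move=> r; rewrite mem_index_iota => /andP[_ /andP[lt_nr _]].
  by rewrite bin_sub_mul_eq0 ?scale0r //; nia.
apply: eq_big_nat => r /andP[_ le_rn].
by rewrite (_ : _ - _ = (w - r * m)%N%:Z) ?binz_nat //; nia.
Qed.

Lemma ZsumS (N w : nat) : (m <= w)%N ->
  Zsum N.+1 w.+1 - Zsum N.+1 w = sylv (Zsum N (w - m)).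
Proof.
move=> le_mw; rewrite /Zsum -sumrB big_ord_recl !subn0 !bin0 subrr add0r.
rewrite linear_sum; apply: eq_bigr => s _.
by rewrite -scalerBl linearZ /= bin_sub_mulS // natrD addrK.
Qed.

Lemma Zmat_eq0 (u : int) : u < - m%:Z -> Z u = 0.
Proof. by move=> lt_u; rewrite /Zmat lt_u. Qed.

Lemma Zmat_eq1 (u : int) : - m%:Z <= u <= 0 -> Z u = 1%:M.
Proof. by move=> /andP[ge_u le_u0]; rewrite /Zmat ltNge ge_u le_u0. Qed.

Lemma ZmatS (v : int) :
  Z (v + 1) - Z v = sylv (Z (v - m%:Z)) + (if v == - m%:Z - 1 then 1%:M else 0).
Proof.
have [|lt_v0] := leP 0 v.
  case: v => [n|//] _; rewrite ZmatE ifN; last lia.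
  have ZnE (k : nat) : Z k%:Z = Zsum (k + m).+1 (k + m) by rewrite -ZmatE; congr Z; lia.
  rewrite (_ : n%:Z + 1 = n.+1) ?ZnE ?addSn; last lia.
  rewrite -(@Zsum_widen (n + m).+2 (n + m)) // ZsumS ?leq_addl // addnK.
  by rewrite (@Zsum_widen (n + m).+1 n) ?addr0 //; lia.
rewrite (@Zmat_eq0 (v - m%:Z)) ?linear0 ?add0r; last lia.
have [/eqP-> | ne_v] := ifP.
  by rewrite subrK Zmat_eq1 ?Zmat_eq0 ?subr0 //; lia.
have [ge_v | lt_v] := leP (- m%:Z) v.
  by rewrite !Zmat_eq1 ?subrr //; lia.
by rewrite !Zmat_eq0 ?subrr //; lia.
Qed.

Lemma Zmat_mulS (v : int) (P : 'M[R]_d) : comm_mx A1 P ->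
  Z (v + 1) *m P - Z v *m P = sylv (Z (v - m%:Z) *m P) + (if v == - m%:Z - 1 then P else 0).
Proof.
move=> hP; rewrite -mulmxBl ZmatS mulmxDl sylv_mulmx //.
by case: ifP; rewrite ?mul1mx ?mul0mx.
Qed.

End Kernel.

Section Solution.
Variables (R : realType) (d : nat) (A0 A1 : 'M[R]_d) (m : nat) (G Psi : int -> 'M[R]_d).
Local Notation Z := (Zmat A0 A1 m).
Local Notation sylv := (sylv A0 A1).

Lemma solves_ivp_unique (X Y : int -> 'M[R]_d) :
  solves_ivp A0 A1 m G Psi X -> solves_ivp A0 A1 m G Psi Y ->
  forall u : int, - m%:Z <= u -> X u = Y u.
Proof.
move=> [eqX iniX] [eqY iniY].
suff agree (w : nat) (u : int) : - m%:Z <= u <= w%:Z -> X u = Y u.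
  by move=> u ge_u; apply: (agree (absz (u + m%:Z)) u); lia.
elim: w u => [|w IH] u /andP[ge_u le_uw]; first by rewrite iniX ?iniY ?ge_u.
have [le_uw' | gt_uw] := leP u w%:Z; first by apply: IH; rewrite ge_u.
have -> : u = w%:Z + 1 by lia.
have := eqX w (le0z_nat w); have := eqY w (le0z_nat w); rewrite /DeltaM.
move=> /(canRL (subrK _)) -> /(canRL (subrK _)) ->.
by rewrite !IH //; lia.
Qed.

Hypothesis hG : forall u : int, 0 <= u -> comm_mx A1 (G u).
Hypothesis hPsi : forall u : int, - m%:Z <= u <= 0 -> comm_mx A1 (Psi u).

(* With the range of the G-sum fixed, X(u+1) - X(u) is a termwise difference. *)
Definition Xtrunc (N : nat) (u : int) : 'M[R]_d :=
  Z u *m Psi (- m%:Z)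
  + \sum_(0 <= k < m) Z (u - m%:Z - (k%:Z - m%:Z + 1)) *m DeltaM Psi (k%:Z - m%:Z + 1 - 1)
  + \sum_(1 <= k < N.+1) Z (u - m%:Z - k%:Z) *m G (k%:Z - 1).

Lemma Xtrunc_widen (N N' : nat) (u : int) :
  u <= N%:Z -> (N <= N')%N -> Xtrunc N u = Xtrunc N' u.
Proof.
move=> le_uN le_NN'; congr (_ + _); rewrite [RHS](big_cat_nat _ (n := N.+1)) //=.
rewrite [X in _ = _ + X]big1_seq ?addr0 // => k.
by rewrite mem_index_iota => /andP[_ /andP[lt_Nk _]]; rewrite Zmat_eq0 ?mul0mx //; lia.
Qed.

Lemma Xsol_Xtrunc (N : nat) (u : int) : u <= N%:Z -> Xsol A0 A1 m G Psi u = Xtrunc N u.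
Proof.
move=> le_uN; have [le_u0 | gt_u0] := leP u 0.
  rewrite -(@Xtrunc_widen 0 N u) // /Xsol /Xtrunc [\sum_(1 <= k < 1) _]big_geq //.
  by rewrite [X in _ + X = _]big_pred0 // => k; rewrite ltNge le_u0.
case: u le_uN gt_u0 => [[|p]|//] le_uN gt_u0 //.
by rewrite -(@Xtrunc_widen p.+1 N).
Qed.

Lemma Xtrunc_step (N n : nat) : (n < N)%N ->
  Xtrunc N (n%:Z + 1) - Xtrunc N n = sylv (Xtrunc N (n%:Z - m%:Z)) + G n.
Proof.
move=> lt_nN; rewrite /Xtrunc subr_add3 -!sumrB !linearD !linear_sum /= -[RHS]addrA.
congr (_ + _ + _).
- have hP : comm_mx A1 (Psi (- m%:Z)) by apply: hPsi; lia.
  by rewrite Zmat_mulS // ifN ?addr0 //; lia.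
- apply: eq_big_nat => k /andP[_ lt_km].
  have hD : comm_mx A1 (DeltaM Psi (k%:Z - m%:Z + 1 - 1)).
    by apply: comm_mxB; apply: hPsi; lia.
  rewrite (_ : _ + 1 - _ - _ = n%:Z - m%:Z - (k%:Z - m%:Z + 1) + 1); last lia.
  rewrite Zmat_mulS // ifN ?addr0; last lia.
  by congr (sylv (Z _ *m _)); lia.
- rewrite (eq_big_nat _ _ (F2 := fun k : nat =>
    sylv (Z (n%:Z - m%:Z - m%:Z - k%:Z) *m G (k%:Z - 1)) + (if k == n.+1 then G n else 0))).
    have in_range : (0 < n.+1 < N.+1)%N by rewrite ltn0Sn ltnS.
    by rewrite big_split -big_mkcond big_nat1_eq in_range.
  move=> k /andP[ge_k1 _].
  rewrite (_ : _ + 1 - _ - _ = n%:Z - m%:Z - k%:Z + 1); last lia.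
  rewrite Zmat_mulS; last by apply: hG; lia.
  rewrite (_ : n%:Z - m%:Z - k%:Z - m%:Z = n%:Z - m%:Z - m%:Z - k%:Z); last lia.
  congr (_ + _).
  have [-> | ne_kn] := eqVneq k n.+1.
    rewrite ifT; last by apply/eqP; lia.
    by congr G; lia.
  rewrite ifN //; apply/eqP; lia.
Qed.

Lemma Xsol_init (u : int) : - m%:Z <= u <= 0 -> Xsol A0 A1 m G Psi u = Psi u.
Proof.
move=> /andP[ge_u le_u0].
rewrite (@Xsol_Xtrunc 0) // /Xtrunc [\sum_(1 <= k < 1) _]big_geq // addr0.
rewrite Zmat_eq1 ?ge_u // mul1mx.
have [j eq_uj] : exists j : nat, u = - j%:Z by exists `|u|%N; lia.
subst u.
rewrite (big_cat_nat _ (n := m - j)) //=; last lia.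
rewrite [X in _ + (_ + X)]big1_seq ?addr0; last first.
  move=> k /andP[_]; rewrite mem_index_iota => /andP[ge_k _].
  by rewrite Zmat_eq0 ?mul0mx //; lia.
rewrite (telescope_sumr_eq (fun k : nat => Psi (k%:Z - m%:Z))); last first.
- move=> k /andP[_ lt_k]; rewrite Zmat_eq1 ?mul1mx; last lia.
  by rewrite /DeltaM; congr (Psi _ - Psi _); lia.
- lia.
rewrite (_ : (m - j)%N%:Z - m%:Z = - j%:Z); last lia.
rewrite (_ : 0%:Z - m%:Z = - m%:Z); last lia.
by rewrite addrC subrK.
Qed.

Lemma Xsol_solves : solves_ivp A0 A1 m G Psi (Xsol A0 A1 m G Psi).
Proof.
split; last exact: Xsol_init.
case=> [n|//] _; rewrite /DeltaM.
rewrite (@Xsol_Xtrunc n.+1 (n%:Z + 1)); last lia.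
rewrite (@Xsol_Xtrunc n.+1 n); last lia.
rewrite (@Xsol_Xtrunc n.+1 (n%:Z - m%:Z)); last lia.
exact: (Xtrunc_step (ltnSn n)).
Qed.

End Solution.

Theorem theorem9 (R : realType) (d : nat) (hd : (0 < d)%N) (m : nat) (hm : (0 < m)%N)
  (A0 A1 : 'M[R]_d) (G Psi : int -> 'M[R]_d)
  (hG : forall u : int, 0 <= u -> A1 *m G u = G u *m A1)
  (hPsi : forall u : int, - (m%:Z) <= u <= 0 -> A1 *m Psi u = Psi u *m A1) :
  solves_ivp A0 A1 m G Psi (Xsol A0 A1 m G Psi)
  /\ (forall X : int -> 'M[R]_d, solves_ivp A0 A1 m G Psi X ->
        forall u : int, - (m%:Z) <= u -> X u = Xsol A0 A1 m G Psi u).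
Proof.
have solX := @Xsol_solves R d A0 A1 m G Psi hG hPsi.
split=> // X solvesX; exact: solves_ivp_unique solvesX solX.
Qed.
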